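(* Let $P$ be a partial order on $[n]$ which is a disjoint union of chains $c_1,\dots,c_m$ (each $c_r$ totally ordered by $P$, elements of distinct chains incomparable, the $c_r$ partitioning $[n]$), and assign to each chain $c$ a relation $\rho_c\in\{<,>,\le,\ge,=\}$. Call $g\in\widetilde{\mathcal F}_n$ $P$-chain monotone if for every chain $c$ and all $i,j\in c$ with $i<_P j$ one has $g(i)\,\rho_c\,g(j)$. Let $\pi$ be uniform on $\mathrm{PF}_n$ and $f$ uniform on $\widetilde{\mathcal F}_n$. Then $$P\{\pi\text{ is }P\text{-chain monotone}\}=P\{f\text{ is }P\text{-chain monotone}\}.$$ (In particular, with $\rho_c$ equal to $<$ for every chain, $P\{\pi\text{ is }P\text{-monotone}\}=P\{f\text{ is }P\text{-monotone}\}$, where $g$ is $P$-monotone if $i<_Pj$ implies $g(i)<g(j)$.)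
   Context: A parking function of length $n$ is a sequence $(\pi_1,\dots,\pi_n)$ with $1\le\pi_i\le n$ such that $\#\{t:\pi_t\le i\}\ge i$ for all $1\le i\le n$; $\mathrm{PF}_n$ denotes the set of these. $\widetilde{\mathcal F}_n$ is the set of all functions $g:[n]\to[n+1]$, so $\mathrm{PF}_n\subseteq\widetilde{\mathcal F}_n$. *)

From HB Require Import structures.
From mathcomp Require Import all_boot all_order all_algebra.
Set Implicit Arguments. Unset Strict Implicit. Unset Printing Implicit Defensive.

(* Functions g : [n] -> [n+1] are encoded as {ffun 'I_n -> 'I_n.+1};
   the element i : 'I_n stands for i+1 in [n] and the value k : 'I_n.+1
   stands for k+1 in [n+1]. *)
Definition Ftilde (n : nat) := {ffun 'I_n -> 'I_n.+1}.

(* parking function: values in [n] and #{t : pi_t <= i} >= i for 1 <= i <= n.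
   With 0-based values v = pi_t - 1, "pi_t <= i" is "v < i". *)
Definition is_parking (n : nat) (g : Ftilde n) : bool :=
  [forall t, (g t : nat) < n] &&
  [forall i : 'I_n.+1, (0 < i) ==> (i <= #|[set t | (g t : nat) < i]|)].

Inductive crel := CLt | CGt | CLe | CGe | CEq.

Definition crel_holds (r : crel) (a b : nat) : bool :=
  match r with
  | CLt => a < b | CGt => a > b | CLe => a <= b | CGe => a >= b | CEq => a == b
  end.

(* A poset on [n] which is a disjoint union of chains is given by the list of
   its chains, each chain listed in increasing P-order; the chains partition [n]
   (their concatenation is a duplicate-free enumeration of 'I_n). *)
Definition chain_partition (n : nat) (cs : seq (seq 'I_n)) : Prop :=
  perm_eq (flatten cs) (enum 'I_n).

Definition chain_lt (n : nat) (c : seq 'I_n) (i j : 'I_n) : bool :=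
  [&& i \in c, j \in c & index i c < index j c].

Definition P_lt (n : nat) (cs : seq (seq 'I_n)) (i j : 'I_n) : bool :=
  has (fun c => chain_lt c i j) cs.

Definition chain_monotone (n : nat) (cr : seq (seq 'I_n * crel)) (g : Ftilde n) : bool :=
  all (fun cp => [forall i, forall j,
          chain_lt cp.1 i j ==> crel_holds cp.2 (g i) (g j)]) cr.

Definition unif_prob (T : finType) (A E : {pred T}) : rat :=
  (#|[predI A & E]|%:R / #|A|%:R)%R.

From HB Require Import structures.
From mathcomp Require Import all_boot all_order all_algebra.
From mathcomp Require Import zify.
Set Implicit Arguments. Unset Strict Implicit. Unset Printing Implicit Defensive.
Import GRing.Theory Num.Theory.

(* Pollak's cycle argument: among the n+1 cyclic shifts x |-> g x + k (mod n+1) of any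
   g : [n] -> [n+1], exactly one is a parking function, namely the shift by n+1-a where a is
   the first minimiser of x |-> #{t | g t < x} - x on (0, n+1].  Re-sorting the values of g
   inside every chain (increasingly or decreasingly according to rho_c) preserves its
   multiset of values, hence whether it is parking, and a P-chain monotone function is
   determined by its multisets of values on the chains.  Therefore (g, k) |-> re-sort of
   the k-th shift of g is a bijection from (PF_n and P-chain monotone) x Z_(n+1) onto the
   P-chain monotone functions, i.e. #(PF_n & monotone) * (n+1) = #monotone for every P.
   Singleton chains give #PF_n * (n+1) = (n+1)^n, and dividing yields the theorem. *)

Definition leftmost_argmin (f : nat -> nat) (m a : nat) :=
  (forall x, 0 < x < a -> f a < f x) /\ (forall x, a < x <= m -> f a <= f x).

Lemma leftmost_argmin_uniq f m a b : 0 < a <= m -> 0 < b <= m ->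
  leftmost_argmin f m a -> leftmost_argmin f m b -> a = b.
Proof.
move=> /andP[a0 am] /andP[b0 bm] [Ab Aa] [Bb Ba].
case: (ltngtP a b) => // ab.
  by have := Bb a; rewrite a0 ab => /(_ isT); rewrite ltnNge Aa ?ab.
by have := Ab b; rewrite b0 ab => /(_ isT); rewrite ltnNge Ba ?ab.
Qed.

Lemma leftmost_argmin_exists f m : exists2 a, 0 < a <= m.+1 & leftmost_argmin f m.+1 a.
Proof.
case: (@arg_minnP _ (ord0 : 'I_m.+1) xpredT (fun i : 'I_m.+1 => f i.+1) isT)
  => i _ i_min.
have min_ge x : 0 < x <= m.+1 -> f i.+1 <= f x.
  by case: x => // x /andP[_ xm]; apply: (i_min (Ordinal xm)).
have exP : exists a, (0 < a <= m.+1) && (f a <= f i.+1).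
  by exists i.+1; rewrite ltnS -ltnS ltn_ord leqnn.
case: (ex_minnP exP) => a /andP[am a_min] a_first.
exists a => //; split=> [x /andP[x0 xa] | x /andP[ax xm]].
  rewrite ltnNge; apply/negP => fxa.
  have := a_first x; rewrite x0 (leq_trans (ltnW xa) (proj2 (andP am))).
  by rewrite (leq_trans fxa a_min) => /(_ isT); rewrite leqNgt xa.
apply: leq_trans a_min (min_ge x _).
by rewrite xm (leq_ltn_trans (leq0n a) ax).
Qed.

Lemma chain_lt_pairwise n (c : seq 'I_n) (e : rel 'I_n) : uniq c ->
  [forall i, forall j, chain_lt c i j ==> e i j] = pairwise e c.
Proof.
case: c => [|x0 c0] uc; first by apply/forallP => i; apply/forallP => j.
set c := x0 :: c0 in uc *; apply/idP/(pairwiseP x0).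
  move=> /forallP lt_e i j; rewrite !inE => ic jc ij.
  have /forallP/(_ (nth x0 c j))/implyP := lt_e (nth x0 c i); apply.
  by rewrite /chain_lt !mem_nth // !index_uniq.
move=> pw; apply/forallP => i; apply/forallP => j; apply/implyP => /and3P[ic jc ij].
by rewrite -(nth_index x0 ic) -(nth_index x0 jc) pw // inE index_mem.
Qed.

Fixpoint relabel (I : eqType) (V A : Type) (cs : seq (seq I * A))
    (ar : A -> seq V -> seq V) (g : I -> V) (t : I) : V :=
  if cs is cp :: cs' then
    if t \in cp.1 then nth (g t) (ar cp.2 (map g cp.1)) (index t cp.1)
    else relabel cs' ar g t
  else g t.

Lemma map_relabel (I : eqType) (V : Type) (A : eqType) (cs : seq (seq I * A))
    (ar : A -> seq V -> seq V) (g : I -> V) (cp : seq I * A) :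
  uniq (flatten (map fst cs)) -> cp \in cs ->
  size (ar cp.2 (map g cp.1)) = size cp.1 ->
  map (relabel cs ar g) cp.1 = ar cp.2 (map g cp.1).
Proof.
elim: cs => //= cp' cs IH; rewrite cat_uniq inE => /and3P[ucp' disj ucs] cpin size_ar.
have [cp_eq|cp_cs] := eqVneq cp cp'; last first.
  move: cpin; rewrite (negbTE cp_cs) /= => cpin; rewrite -IH //.
  apply/eq_in_map => t tc; case: ifP => // tcp'; case/negP: disj.
  by apply/hasP; exists t => //; apply/flattenP; exists cp.1 => //; apply: map_f.
subst cp'; case: cp ucp' size_ar {cpin disj IH} => -[|x0 c] r // uc size_ar.
  by case: (ar r _) size_ar.
apply: (@eq_from_nth _ (g x0)); rewrite size_map // => i ilt.
rewrite (nth_map x0) // mem_nth // index_uniq //.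
by apply: set_nth_default; rewrite size_ar.
Qed.

Section Pollak.
Variable n : nat.
Local Notation N := n.+1.

Definition count_lt (g : Ftilde n) (x : nat) := #|[set t | (g t : nat) < x]|.

Definition shift (k : 'I_N) (g : Ftilde n) : Ftilde n := [ffun t => g t + k]%R.

Lemma count_ltE g x : count_lt g x = \sum_t ((g t : nat) < x).
Proof.
rewrite /count_lt -sum1_card big_mkcond /=.
by apply: eq_bigr => t _; rewrite inE; case: ltnP.
Qed.

Lemma is_parkingE g : is_parking g <-> (forall j, 0 < j <= n -> j <= count_lt g j).
Proof.
split=> [/andP[_ /forallP parkg] j /andP[j0 jn] | parkg].
  by have := parkg (@Ordinal N j jn); rewrite /= j0.
apply/andP; split; last first.
  by apply/forallP => j; apply/implyP => j0; apply: parkg; rewrite j0 -ltnS /=.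
apply/forallP => t; have n0 : 0 < n by apply: leq_ltn_trans (ltn_ord t).
have all_lt_n : [set t | (g t : nat) < n] = setT.
  by apply/eqP; rewrite eqEcard subsetT cardsT card_ord; apply: parkg; rewrite n0 /=.
by have := in_setT t; rewrite -all_lt_n inE.
Qed.

Lemma count_lt_shift g (k : 'I_N) j : j <= n ->
  count_lt (shift k g) j + count_lt g (N - k) =
  if j <= k then count_lt g (N - k + j) else count_lt g (j - k) + n.
Proof.
move=> jn; have kN := ltn_ord k.
rewrite !count_ltE -big_split /=.
case: ifP => jk; last rewrite -[X in _ = _ + X](card_ord n) -sum1_card -big_split /=.
all: apply: eq_bigr => t _; rewrite ffunE /=; have vN := ltn_ord (g t).
all: have [wrap|nowrap] := leqP N (g t + k);
  [rewrite -(subnK wrap) modnDr modn_small; last lia | rewrite modn_small //].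
all: do 3 case: ltnP; lia.
Qed.

(* [count_lt g x - x] shifted by [N], to stay clear of truncated subtraction. *)
Definition excess g x := count_lt g x + (N - x).

Lemma is_parking_shift_at g (k : 'I_N) j : 0 < j <= n ->
  (j <= count_lt (shift k g) j) =
  if j <= k then excess g (N - k) <= excess g (N - k + j)
  else excess g (N - k) < excess g (j - k).
Proof.
move=> /andP[j0 jn]; have := count_lt_shift g k jn; have := ltn_ord k.
by rewrite /excess; case: ifP => jk kN shiftE; apply/idP/idP; lia.
Qed.

Lemma is_parking_shiftE g (k : 'I_N) :
  is_parking (shift k g) <-> leftmost_argmin (excess g) N (N - k).
Proof.
rewrite is_parkingE; have kN := ltn_ord k.
split=> [parks | [before after] j jP].
  split=> [x /andP[x0 xk] | x /andP[kx xN]].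
    have jP : 0 < x + k <= n by lia.
    have := parks _ jP; rewrite is_parking_shift_at // addnK.
    by case: (leqP (x + k) k); lia.
  have jP : 0 < x - (N - k) <= n by lia.
  have := parks _ jP; rewrite is_parking_shift_at // subnKC; last lia.
  by case: (leqP (x - (N - k)) k); lia.
rewrite is_parking_shift_at //; case: (leqP j k) => jk; [apply: after | apply: before]; lia.
Qed.

Lemma parking_shift_exists g : exists k : 'I_N, is_parking (shift k g).
Proof.
have [a /andP[a0 aN] amin] := leftmost_argmin_exists (excess g) n.
have kN : N - a < N by lia.
by exists (Ordinal kN); apply/is_parking_shiftE; rewrite /= subKn.
Qed.

Lemma parking_shift_unique g (k k' : 'I_N) :
  is_parking (shift k g) -> is_parking (shift k' g) -> k = k'.
Proof.
move=> /is_parking_shiftE park /is_parking_shiftE park'.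
have kN := ltn_ord k; have k'N := ltn_ord k'.
apply/val_inj => /=; suff : N - k = N - k' by lia.
by apply: (leftmost_argmin_uniq _ _ park park'); lia.
Qed.

Lemma count_lt_codom g x : count_lt g x = \sum_(v <- codom g) ((v : nat) < x).
Proof. by rewrite count_ltE /codom big_image. Qed.

Lemma is_parking_perm (g h : Ftilde n) :
  perm_eq (codom g) (codom h) -> is_parking g -> is_parking h.
Proof.
move=> gh /is_parkingE park_g; apply/is_parkingE => j /park_g.
by rewrite !count_lt_codom (perm_big _ gh).
Qed.

Lemma shift_add (k k' : 'I_N) (g : Ftilde n) : shift k (shift k' g) = shift (k' + k)%R g.
Proof. by apply/ffunP => t; rewrite !ffunE addrA. Qed.

Lemma shift0 (g : Ftilde n) : shift 0%R g = g.
Proof. by apply/ffunP => t; rewrite !ffunE addr0. Qed.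

Lemma shiftK (k : 'I_N) (g : Ftilde n) : shift (- k)%R (shift k g) = g.
Proof. by rewrite shift_add subrr shift0. Qed.

Lemma map_shift (k : 'I_N) (g : Ftilde n) c :
  map (shift k g) c = map (fun v => v + k)%R (map g c).
Proof. by rewrite -map_comp; apply: eq_map => t; rewrite ffunE. Qed.
End Pollak.

Definition crel_eqb (a b : crel) : bool :=
  match a, b with
  | CLt, CLt | CGt, CGt | CLe, CLe | CGe, CGe | CEq, CEq => true
  | _, _ => false
  end.

Lemma crel_eqP : Equality.axiom crel_eqb.
Proof. by case; case; constructor. Qed.

HB.instance Definition _ := hasDecEq.Build crel crel_eqP.

Section Chains.
Variable n : nat.
Local Notation N := n.+1.
Local Notation T := (Ftilde n).

Definition holds (r : crel) : rel 'I_N := relpre val (crel_holds r).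

Lemma holds_anti r : antisymmetric (holds r).
Proof.
move=> a b; rewrite /holds /= => /andP[].
by case: r => /= ab ba; apply/val_inj => /=; lia.
Qed.

Definition arrange (r : crel) (s : seq 'I_N) : seq 'I_N :=
  match r with
  | CLt | CLe => sort (relpre val leq) s
  | CGt | CGe => sort (relpre val geq) s
  | CEq => s
  end.

Definition sortable (r : crel) (s : seq 'I_N) : bool :=
  match r with
  | CLt | CGt => uniq s
  | CLe | CGe => true
  | CEq => pairwise (holds CEq) s
  end.

Lemma perm_arrange r s : perm_eq (arrange r s) s.
Proof. by case: r; rewrite /= ?perm_sort. Qed.

Lemma arrange_pairwise r s : sortable r s -> pairwise (holds r) (arrange r s).
Proof.
have geq_total : total geq by move=> a b; apply: leq_total.
have gtn_trans : transitive gtn by move=> b a c ab bc; apply: ltn_trans bc ab.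
have geq_trans : transitive geq by move=> b a c ab bc; apply: leq_trans bc ab.
case: r => //= sortable_s; rewrite /holds -pairwise_map -?sort_map.
- rewrite -(sorted_pairwise ltn_trans) ltn_sorted_uniq_leq sort_uniq.
  by rewrite (map_inj_uniq val_inj) sortable_s sort_sorted //; apply: leq_total.
- rewrite -(sorted_pairwise gtn_trans) gtn_sorted_uniq_geq sort_uniq.
  by rewrite (map_inj_uniq val_inj) sortable_s (sort_sorted geq_total).
- by rewrite -(sorted_pairwise leq_trans) sort_sorted //; apply: leq_total.
- by rewrite -(sorted_pairwise geq_trans) (sort_sorted geq_total).
Qed.

Lemma pairwise_sortable r s : pairwise (holds r) s -> sortable r s.
Proof. by case: r => //= pw; apply: (pairwise_uniq _ pw) => x; rewrite /holds /= ltnn. Qed.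

Lemma sortable_shift r s (k : 'I_N) : sortable r (map (fun v => v + k)%R s) = sortable r s.
Proof.
have shift_inj : injective (fun v : 'I_N => v + k)%R by apply: addIr.
case: r => //=; rewrite ?(map_inj_uniq shift_inj) // pairwise_map.
by apply: eq_pairwise => a b; rewrite /holds /= eqn_modDr !modn_small.
Qed.

Variable cr : seq (seq 'I_n * crel).
Hypothesis cr_partition : chain_partition (map fst cr).

Lemma chains_uniq : uniq (flatten (map fst cr)).
Proof. by rewrite (perm_uniq cr_partition) enum_uniq. Qed.

Lemma chain_uniq cp : cp \in cr -> uniq cp.1.
Proof.
move=> cpin; have := chains_uniq.
rewrite (perm_uniq (perm_flatten (perm_to_rem (map_f fst cpin)))) cat_uniq.
by case/andP.
Qed.

Lemma chain_monotoneE g :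
  chain_monotone cr g = all (fun cp => pairwise (holds cp.2) (map g cp.1)) cr.
Proof.
by apply: eq_in_all => cp /chain_uniq uc; rewrite pairwise_map -chain_lt_pairwise.
Qed.

Definition chain_perm (g h : T) := all (fun cp => perm_eq (map g cp.1) (map h cp.1)) cr.

Lemma chain_perm_sym g h : chain_perm g h -> chain_perm h g.
Proof. by move/allP=> gh; apply/allP => cp /gh; rewrite perm_sym. Qed.

Lemma chain_perm_trans g h f : chain_perm g h -> chain_perm h f -> chain_perm g f.
Proof.
by move/allP=> gh /allP hf; apply/allP => cp cpin; apply: perm_trans (gh _ cpin) (hf _ cpin).
Qed.

Lemma chain_perm_shift k g h : chain_perm g h -> chain_perm (shift k g) (shift k h).
Proof. by move/allP=> gh; apply/allP => cp /gh gh_cp; rewrite !map_shift perm_map. Qed.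

Lemma chain_perm_codom g h : chain_perm g h -> perm_eq (codom g) (codom h).
Proof.
have codom_chains (f : T) : perm_eq (codom f) (flatten [seq map f cp.1 | cp <- cr]).
  rewrite codomE (map_comp (map f) fst) -map_flatten perm_map //.
  by rewrite perm_sym.
move=> gh; apply: perm_trans (codom_chains g) _; rewrite perm_sym.
apply: perm_trans (codom_chains h) _; rewrite perm_sym.
move: gh; rewrite /chain_perm; elim: (cr) => //= cp cs IH /andP[gh_cp gh_cs].
by rewrite perm_cat ?IH.
Qed.

Lemma chain_perm_monotone_eq g h :
  chain_monotone cr g -> chain_monotone cr h -> chain_perm g h -> g = h.
Proof.
rewrite !chain_monotoneE => /allP mono_g /allP mono_h /allP gh; apply/ffunP => t.
have /flattenP[_ /mapP[cp cpin ->] tc] : t \in flatten (map fst cr).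
  by rewrite (perm_mem cr_partition) mem_enum.
have := pairwise_eq (@holds_anti cp.2) (mono_g _ cpin) (mono_h _ cpin) (gh _ cpin).
by move/eq_in_map; apply.
Qed.

Lemma is_parking_chain_perm g h : chain_perm g h -> is_parking g -> is_parking h.
Proof. by move/chain_perm_codom; apply: is_parking_perm. Qed.

Definition chain_sort (g : T) : T := [ffun t => relabel cr arrange g t].

Lemma map_chain_sort g cp : cp \in cr -> map (chain_sort g) cp.1 = arrange cp.2 (map g cp.1).
Proof.
move=> cpin; rewrite -(map_relabel (ar := arrange) (g := g) chains_uniq cpin); last first.
  by rewrite (perm_size (perm_arrange _ _)) size_map.
by apply: eq_map => t; rewrite ffunE.
Qed.

Lemma chain_perm_sort g : chain_perm (chain_sort g) g.
Proof. by apply/allP => cp cpin; rewrite map_chain_sort // perm_arrange. Qed.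

Definition chain_sortable (g : T) := all (fun cp => sortable cp.2 (map g cp.1)) cr.

Lemma chain_sort_monotone g : chain_sortable g -> chain_monotone cr (chain_sort g).
Proof.
move/allP=> sortable_g; rewrite chain_monotoneE; apply/allP => cp cpin.
by rewrite map_chain_sort // arrange_pairwise // sortable_g.
Qed.

Lemma monotone_chain_sortable g : chain_monotone cr g -> chain_sortable g.
Proof.
by rewrite chain_monotoneE => /allP mono_g; apply/allP => cp /mono_g/pairwise_sortable.
Qed.

Lemma chain_sortable_shift k g : chain_sortable (shift k g) = chain_sortable g.
Proof. by apply: eq_all => cp; rewrite map_shift sortable_shift. Qed.

Definition rotate (k : 'I_N) (g : T) : T := chain_sort (shift k g).

Lemma rotate_monotone k g : chain_monotone cr g -> chain_monotone cr (rotate k g).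
Proof.
by move=> mono_g; rewrite chain_sort_monotone ?chain_sortable_shift ?monotone_chain_sortable.
Qed.

Lemma rotate_inj g g' k k' :
  is_parking g -> chain_monotone cr g -> is_parking g' -> chain_monotone cr g' ->
  rotate k g = rotate k' g' -> g = g' /\ k = k'.
Proof.
move=> park_g mono_g park_g' mono_g' same_rot.
have shifts_perm : chain_perm (shift k g) (shift k' g').
  apply: chain_perm_trans (chain_perm_sym (chain_perm_sort _)) _.
  by rewrite -/(rotate k g) same_rot; apply: chain_perm_sort.
have g_perm : chain_perm (shift (k - k')%R g) g'.
  by have := chain_perm_shift (- k')%R shifts_perm; rewrite shiftK shift_add.
have kk' : k = k'.
  have park_shift : is_parking (shift (k - k')%R g).
    exact: is_parking_chain_perm (chain_perm_sym g_perm) park_g'.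
  have park0 : is_parking (shift 0%R g) by rewrite shift0.
  by apply/eqP; rewrite -subr_eq0; apply/eqP/(parking_shift_unique park_shift park0).
subst k'; split=> //; apply: chain_perm_monotone_eq mono_g mono_g' _.
by move: g_perm; rewrite subrr shift0.
Qed.

Lemma rotate_surj h : chain_monotone cr h ->
  exists g k, [/\ is_parking g, chain_monotone cr g & rotate k g = h].
Proof.
move=> mono_h; have [k park_shift] := parking_shift_exists h.
exists (rotate k h), (- k)%R; split; first 2 last.
- apply: chain_perm_monotone_eq (rotate_monotone _ (rotate_monotone _ mono_h)) mono_h _.
  apply: chain_perm_trans (chain_perm_sort _) _.
  by rewrite -{2}(shiftK k h); apply/chain_perm_shift/chain_perm_sort.
- exact: is_parking_chain_perm (chain_perm_sym (chain_perm_sort _)) park_shift.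
- exact: rotate_monotone.
Qed.

Lemma card_parking_monotone :
  #|[predI is_parking (n := n) & chain_monotone cr]| * N = #|chain_monotone cr|.
Proof.
rewrite -[X in _ * X = _]card_ord -cardsT -[#|chain_monotone cr|]cardsE.
rewrite -[#|[predI _ & _]|]cardsE -cardsX.
rewrite -(@card_in_imset _ _ (fun x : T * 'I_N => rotate x.2 x.1)); last first.
  move=> [g k] [g' k']; rewrite !inE /= !andbT.
  move=> /andP[park_g mono_g] /andP[park_g' mono_g'] same.
  by have [-> ->] := rotate_inj park_g mono_g park_g' mono_g' same.
apply: eq_card => h; rewrite [in RHS]inE; apply/imsetP/idP.
  by case=> -[g k]; rewrite !inE /= andbT => /andP[_ mono_g] ->; apply: rotate_monotone.
case/rotate_surj=> g [k [park_g mono_g <-]].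
by exists (g, k); rewrite // !inE andbT; apply/andP.
Qed.
End Chains.

Lemma chain_monotone_singletons n (r : crel) (g : Ftilde n) :
  chain_monotone [seq ([:: t], r) | t <- enum 'I_n] g.
Proof.
apply/allP => _ /mapP[t _ ->]; apply/forallP => i; apply/forallP => j.
by rewrite /chain_lt !inE; apply/implyP => /and3P[/eqP -> /eqP ->]; rewrite ltnn.
Qed.

Lemma card_parking n : #|is_parking (n := n)| * n.+1 = #|Ftilde n|.
Proof.
set singletons := [seq ([:: t], CLe) | t <- enum 'I_n].
have partition : chain_partition (map fst singletons).
  by rewrite /chain_partition -map_comp flatten_seq1.
have mono g : g \in chain_monotone singletons by apply: chain_monotone_singletons.
have := card_parking_monotone partition.
rewrite (eq_card (B := is_parking (n := n))) => [|g]; last by rewrite !inE mono andbT.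
by move=> ->; apply: eq_card => g; rewrite mono.
Qed.

Theorem theorem10 (n : nat) (cr : seq (seq 'I_n * crel)) :
  chain_partition (map fst cr) ->
  unif_prob (T := Ftilde n) (is_parking (n := n)) (chain_monotone cr) =
  unif_prob (T := Ftilde n) predT (chain_monotone cr).
Proof.
move=> partition; rewrite /unif_prob -card_parking -(card_parking_monotone partition).
by rewrite !natrM invfM mulrACA divff ?mulr1 ?pnatr_eq0.
Qed.
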